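(* In the two-component BKP hierarchy, for any polynomial $A=A(L,\hat L^{-1},M,\hat M)$ in the Lax operators and Orlov–Schulman operators one has, for every odd $k\ge1$, $$\frac{\partial A}{\partial t_k}=[(L^k)_+,A],\qquad \frac{\partial A}{\partial \hat t_k}=[-(\hat L^k)_-,A].$$
   Context: Let $D=d/dx$; pseudo-differential operators $\sum_{i\in\mathbb Z}f_iD^i$ are multiplied using $D^i f=\sum_{r\ge0}\binom{i}{r}D^r(f)D^{i-r}$; for $A=\sum_i f_iD^i$, $A_+=\sum_{i\ge0}f_iD^i$, $A_-=\sum_{i<0}f_iD^i$, $A^*=\sum_i(-D)^i f_i$. The two-component BKP hierarchy: dressing operators $\Phi=1+\sum_{i\ge1}a_iD^{-i}$, $\hat\Phi=1+\sum_{i\ge1}b_iD^{i}$ with coefficients depending on $t=(t_1,t_3,\dots)$, $\hat t=(\hat t_1,\hat t_3,\dots)$, $t_1=x$, satisfying $\Phi^*=D\Phi^{-1}D^{-1}$, $\hat\Phi^*=D\hat\Phi^{-1}D^{-1}$; Lax operators $L=\Phi D\Phi^{-1}$, $\hat L=\hat\Phi D^{-1}\hat\Phi^{-1}$; flows for odd $k\ge1$: $\partial_{t_k}\Phi=-(L^k)_-\Phi$, $\partial_{t_k}\hat\Phi=((L^k)_+-\delta_{k1}\hat L^{-1})\hat\Phi$, $\partial_{\hat t_k}\Phi=-(\hat L^k)_-\Phi$, $\partial_{\hat t_k}\hat\Phi=(\hat L^k)_+\hat\Phi$. Orlov–Schulman operators: $M=\Phi\Gamma\Phi^{-1}$, $\hat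 M=\hat\Phi\hat\Gamma\hat\Phi^{-1}$, $\Gamma=\sum_{k\ \mathrm{odd}}kt_kD^{k-1}$, $\hat\Gamma=x+\sum_{k\ \mathrm{odd}}k\hat t_kD^{-k-1}$. *)

From HB Require Import structures.
From mathcomp Require Import all_boot all_order all_algebra.
Set Implicit Arguments. Unset Strict Implicit. Unset Printing Implicit Defensive.
Import GRing.Theory.
Local Open Scope ring_scope.

(* An algebra A (over the constant field K) of pseudo-differential operators
   sum_i f_i D^i whose coefficients f_i lie in a commutative ring F of
   functions of x = t_1, t_3, t_5, ..., hat t_1, hat t_3, ...
   Index convention: the time t_(2n+1) is indexed by n : nat (so n = 0 is x). *)
Record psido_alg (K : fieldType) (A : unitAlgType K) (F : comNzRingType) :=
  PsiDOAlg {
  Dop : A;                                   (* D = d/dx *)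
  Dop_unit : Dop \is a GRing.unit;
  coef : {rmorphism F -> A};                 (* f |-> multiplication operator f *)
  coef_inj : injective coef;
  (* derivatives of functions: dtF n = d/dt_(2n+1), dthF n = d/d hat t_(2n+1) *)
  dtF : nat -> F -> F;
  dthF : nat -> F -> F;
  dtF_add : forall n f g, dtF n (f + g) = dtF n f + dtF n g;
  dtF_mul : forall n f g, dtF n (f * g) = dtF n f * g + f * dtF n g;
  dthF_add : forall n f g, dthF n (f + g) = dthF n f + dthF n g;
  dthF_mul : forall n f g, dthF n (f * g) = dthF n f * g + f * dthF n g;
  (* coefficientwise derivatives of operators *)
  dt : nat -> A -> A;
  dth : nat -> A -> A;
  dt_add : forall n a b, dt n (a + b) = dt n a + dt n b;
  dt_scale : forall n (c : K) a, dt n (c *: a) = c *: dt n a;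
  dt_mul : forall n a b, dt n (a * b) = dt n a * b + a * dt n b;
  dt_D : forall n, dt n Dop = 0;
  dt_coef : forall n f, dt n (coef f) = coef (dtF n f);
  dth_add : forall n a b, dth n (a + b) = dth n a + dth n b;
  dth_scale : forall n (c : K) a, dth n (c *: a) = c *: dth n a;
  dth_mul : forall n a b, dth n (a * b) = dth n a * b + a * dth n b;
  dth_D : forall n, dth n Dop = 0;
  dth_coef : forall n f, dth n (coef f) = coef (dthF n f);
  D_comm : forall a, Dop * a - a * Dop = dt 0 a;
  pd_plus : A -> A;
  pd_minus : A -> A;
  pd_plus_add : forall a b, pd_plus (a + b) = pd_plus a + pd_plus b;
  pd_plus_scale : forall (c : K) a, pd_plus (c *: a) = c *: pd_plus a;
  pd_plus_minus : forall a, pd_plus a + pd_minus a = a;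
  pd_plus_idem : forall a, pd_plus (pd_plus a) = pd_plus a;
  pd_plus_Dpos : forall m, pd_plus (Dop ^+ m) = Dop ^+ m;
  pd_plus_Dneg : forall m, pd_plus (Dop ^- m.+1) = 0;
  pd_plus_coefl : forall f a, pd_plus (coef f * a) = coef f * pd_plus a;
  adj : A -> A;
  adj_add : forall a b, adj (a + b) = adj a + adj b;
  adj_scale : forall (c : K) a, adj (c *: a) = c *: adj a;
  adj_mul : forall a b, adj (a * b) = adj b * adj a;
  adj_coef : forall f, adj (coef f) = coef f;
  adj_D : adj Dop = - Dop
}.

Section Lax.
Variables (K : fieldType) (A : unitAlgType K) (F : comNzRingType).
Variable P : psido_alg A F.
Variables (Phi Phih Gam Gamh : A).

Local Notation D := (Dop P).

Definition laxL : A := Phi * D * Phi^-1.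
Definition laxLh : A := Phih * D^-1 * Phih^-1.
Definition osM : A := Phi * Gam * Phi^-1.
Definition osMh : A := Phih * Gamh * Phih^-1.

Definition is_Gamma : Prop :=
  (forall n, dt P n Gam = (2 * n + 1)%:R * D ^+ (2 * n)) /\
  (forall n, dth P n Gam = 0).

(* hat Gamma = x + sum_(k odd) k hat t_k D^(-k-1). *)
Definition is_Gammah : Prop :=
  (forall n, dt P n Gamh = (if n == 0%N then 1 else 0)) /\
  (forall n, dth P n Gamh = (2 * n + 1)%:R * D ^- (2 * n + 2)).

Definition two_comp_BKP : Prop :=
  [/\ Phi \is a GRing.unit /\ Phih \is a GRing.unit,
      (* Phi = 1 + sum_(i>=1) a_i D^(-i),  hat Phi = 1 + sum_(i>=1) b_i D^i *)
      pd_plus P Phi = 1 /\ pd_minus P (Phih * D^-1) = D^-1,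
      adj P Phi = D * Phi^-1 * D^-1 /\ adj P Phih = D * Phih^-1 * D^-1 &
      forall n : nat,
        [/\ dt P n Phi = - pd_minus P (laxL ^+ (2 * n + 1)) * Phi,
            dt P n Phih = (pd_plus P (laxL ^+ (2 * n + 1))
                           - (if n == 0%N then laxLh^-1 else 0)) * Phih,
            dth P n Phi = - pd_minus P (laxLh ^+ (2 * n + 1)) * Phi &
            dth P n Phih = pd_plus P (laxLh ^+ (2 * n + 1)) * Phih]].

End Lax.

Inductive lax_var := VL | VLhinv | VM | VMh.

Inductive ncpoly (K : Type) :=
| NCconst of K
| NCvar of lax_var
| NCadd of ncpoly K & ncpoly K
| NCmul of ncpoly K & ncpoly K.

Fixpoint nceval (K : fieldType) (A : unitAlgType K) (vL vLhinv vM vMh : A)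
  (p : ncpoly K) : A :=
  match p with
  | NCconst c => c%:A
  | NCvar VL => vL
  | NCvar VLhinv => vLhinv
  | NCvar VM => vM
  | NCvar VMh => vMh
  | NCadd p q => nceval vL vLhinv vM vMh p + nceval vL vLhinv vM vMh q
  | NCmul p q => nceval vL vLhinv vM vMh p * nceval vL vLhinv vM vMh q
  end.

Definition opcomm (R : nzRingType) (a b : R) := a * b - b * a.

From mathcomp Require Import all_boot all_order all_algebra.
Import GRing.Theory.
Local Open Scope ring_scope.

(* Each of L, hat L^-1, M, hat M is a dressing W X W^-1 of X = D, Gamma or
   hat Gamma by W = Phi or hat Phi, and a derivation with d W = B W acts on a
   dressing as [B, .] plus the dressing of d X.  The bare derivatives d X are
   exactly the needed corrections: for the t_k flows of Phi-dressed operators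
   B = -(L^k)_-, and d Gamma dresses to k L^(k-1) = [L^k, M], which turns
   [-(L^k)_-, .] into [(L^k)_+, .]; for hat Phi-dressed ones the
   delta_k1 hat L^-1 part of B is cancelled by d hat Gamma = delta_k1, since
   [hat L^-1, hat M] = 1.  The hat t_k flows are symmetric.  Finally, two
   derivations killing the scalars that agree on the four generators agree on
   every polynomial in them. *)

Section Commutator.
Context {R : unitRingType}.
Implicit Types a b x y : R.

Lemma opcommDl a b x : opcomm (a + b) x = opcomm a x + opcomm b x.
Proof. by rewrite /opcomm mulrDl mulrDr opprD addrACA. Qed.

Lemma opcommNl a x : opcomm (- a) x = - opcomm a x.
Proof. by rewrite /opcomm mulNr mulrN opprB opprK addrC. Qed.

Lemma opcommBl a b x : opcomm (a - b) x = opcomm a x - opcomm b x.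
Proof. by rewrite opcommDl opcommNl. Qed.

Lemma opcommDr a x y : opcomm a (x + y) = opcomm a x + opcomm a y.
Proof. by rewrite /opcomm mulrDl mulrDr opprD addrACA. Qed.

Lemma opcommMr a x y : opcomm a (x * y) = opcomm a x * y + x * opcomm a y.
Proof. by rewrite /opcomm mulrBl mulrBr !mulrA addrA addrNK. Qed.

Lemma opcommMl a b x : opcomm (a * b) x = a * opcomm b x + opcomm a x * b.
Proof. by rewrite /opcomm mulrBl mulrBr !mulrA addrA addrNK -!mulrA. Qed.

Lemma opcomm_comm a x : GRing.comm a x -> opcomm a x = 0.
Proof. by move=> cax; rewrite /opcomm cax subrr. Qed.

Lemma opcomm0l x : opcomm 0 x = 0.
Proof. by rewrite /opcomm mul0r mulr0 subrr. Qed.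

Lemma opcomm_Nsplit a b x : opcomm (- b) x = opcomm a x - opcomm (a + b) x.
Proof.
by apply/eqP; rewrite opcommNl opcommDl eq_sym subr_eq addrCA addNr addr0.
Qed.

Lemma opcomm_conj u a b : u \is a GRing.unit ->
  opcomm (u * a * u^-1) (u * b * u^-1) = u * opcomm a b * u^-1.
Proof.
move=> uu; rewrite /opcomm mulrBr mulrBl !mulrA.
by rewrite -[u * a * u^-1 * u]mulrA -[u * b * u^-1 * u]mulrA !mulVr // !mulr1.
Qed.

Lemma exprconj u a m : u \is a GRing.unit ->
  (u * a * u^-1) ^+ m = u * a ^+ m * u^-1.
Proof.
move=> uu; elim: m => [|m IHm]; first by rewrite !expr0 mulr1 mulrV.
by rewrite !exprS IHm !mulrA -[u * a * u^-1 * u]mulrA mulVr // mulr1.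
Qed.

(* With [a, x] = 1 this is [D^(m+1), x] = (m+1) D^m, as for x = Gamma. *)
Lemma opcommXl {a x y} m : opcomm a x = y -> GRing.comm a y ->
  opcomm (a ^+ m.+1) x = m.+1%:R * (a ^+ m * y).
Proof.
move=> axy cay; elim: m => [|m IHm]; first by rewrite expr0 !mul1r.
rewrite exprS opcommMl IHm axy mulrA (commr_nat a) -mulrA.
rewrite [a * (_ * _)]mulrA -exprS.
by rewrite (commrX m.+1 (commr_sym cay)) -[m.+2%:R]natr1 mulrDl mul1r.
Qed.

Lemma opcommVl {a x} : a \is a GRing.unit -> opcomm a x = 1 ->
  opcomm a^-1 x = - (a^-1 * a^-1).
Proof.
move=> ua ax1.
have : a^-1 * opcomm a x * a^-1 = x * a^-1 - a^-1 * x.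
  by rewrite /opcomm mulrBr mulKr // mulrBl mulrA mulrK.
by rewrite ax1 mulr1 => ->; rewrite opprB.
Qed.

End Commutator.

Section Leibniz.
Context {R : unitRingType} {d : R -> R}.
Hypothesis dM : forall a b, d (a * b) = d a * b + a * d b.

Lemma leibniz1 : d 1 = 0.
Proof.
have := dM 1 1; rewrite !mulr1 mul1r => d11.
by apply: (addrI (d 1)); rewrite -d11 addr0.
Qed.

Lemma leibnizV u : u \is a GRing.unit -> d u^-1 = - (u^-1 * d u * u^-1).
Proof.
move=> uu; apply/eqP; rewrite -addr_eq0.
have : u^-1 * d (u * u^-1) = 0 by rewrite mulrV // leibniz1 mulr0.
by rewrite dM mulrDr mulKr // mulrA addrC => ->.
Qed.

Lemma leibniz_dressing w b x : w \is a GRing.unit -> d w = b * w ->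
  d (w * x * w^-1) = opcomm b (w * x * w^-1) + w * d x * w^-1.
Proof.
move=> uw dw; rewrite !dM leibnizV // dw /opcomm.
by rewrite !mulrA mulrK // mulrDl mulrN !mulrA addrAC.
Qed.

End Leibniz.

Lemma nceval_derivation {K : fieldType} {A : unitAlgType K} {d : A -> A}
    {b vL vLhinv vM vMh : A} :
  (forall x y, d (x + y) = d x + d y) ->
  (forall x y, d (x * y) = d x * y + x * d y) ->
  (forall (c : K) x, d (c *: x) = c *: d x) ->
  d vL = opcomm b vL -> d vLhinv = opcomm b vLhinv ->
  d vM = opcomm b vM -> d vMh = opcomm b vMh ->
  forall p,
  d (nceval vL vLhinv vM vMh p) = opcomm b (nceval vL vLhinv vM vMh p).
Proof.
move=> dD dM dZ dL dLhinv dM_ dMh; elim=> [c|[]|p IHp q IHq|p IHp q IHq] //=.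
- by rewrite dZ leibniz1 // scaler0 /opcomm mulr_algl mulr_algr subrr.
- by rewrite dD IHp IHq opcommDr.
- by rewrite dM IHp IHq opcommMr.
Qed.

Section TwoComponentBKP.
Context {K : fieldType} {A : unitAlgType K} {F : comNzRingType}.
Context {P : psido_alg A F} {Phi Phih Gam Gamh : A}.
Hypothesis bkp : two_comp_BKP P Phi Phih.
Hypotheses (gam : is_Gamma P Gam) (gamh : is_Gammah P Gamh).

Local Notation D := (Dop P).
Local Notation L := (laxL P Phi).
Local Notation Lh := (laxLh P Phih).
Local Notation M := (osM Phi Gam).
Local Notation Mh := (osMh Phih Gamh).

Let unitD : D \is a GRing.unit := Dop_unit P.
Let unitPhi : Phi \is a GRing.unit. Proof. by case: bkp => -[]. Qed.
Let unitPhih : Phih \is a GRing.unit. Proof. by case: bkp => -[]. Qed.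

Lemma laxLh_inv : Lh^-1 = Phih * D * Phih^-1.
Proof. by rewrite /laxLh !invrM ?unitrV ?unitrMl ?unitrV // !invrK mulrA. Qed.

Lemma opcomm_D_Gam : opcomm D Gam = 1.
Proof. by case: gam => dtGam _; rewrite /opcomm D_comm dtGam mul1r expr0. Qed.

Lemma opcomm_D_Gamh : opcomm D Gamh = 1.
Proof. by case: gamh => dtGamh _; rewrite /opcomm D_comm dtGamh. Qed.

Lemma opcomm_laxL_osM m : opcomm (L ^+ m.+1) M = m.+1%:R * L ^+ m.
Proof.
rewrite /laxL /osM !exprconj // opcomm_conj //.
rewrite (opcommXl m opcomm_D_Gam (commr1 _)) mulr1.
by rewrite !mulr_natl mulrnAr mulrnAl.
Qed.

Lemma opcomm_laxLh_inv_osMh : opcomm Lh^-1 Mh = 1.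
Proof. by rewrite laxLh_inv opcomm_conj // opcomm_D_Gamh mulr1 mulrV. Qed.

Lemma opcomm_laxLh_osMh m :
  opcomm (Lh ^+ m.+1) Mh = - (Phih * (m.+1%:R * D ^- m.+2) * Phih^-1).
Proof.
have cDV : GRing.comm D^-1 (- (D^-1 * D^-1)).
  exact/commrN/commrM/commr_refl/commr_refl.
rewrite /laxLh /osMh !exprconj // opcomm_conj //.
rewrite (opcommXl m (opcommVl unitD opcomm_D_Gamh) cDV).
by rewrite !mulrN mulNr -exprVn !exprSr !mulrA.
Qed.

Section Flow.
Variable n : nat.
Local Notation k := (2 * n + 1)%N.

Let flows := let: And4 _ _ _ f := bkp in f n.

Let k_succ : k = (2 * n).+1. Proof. by rewrite addn1. Qed.

Lemma dt_laxL : dt P n L = opcomm (pd_plus P (L ^+ k)) L.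
Proof.
case: flows => dtPhi _ _ _.
rewrite {1}/laxL (leibniz_dressing (dt_mul P n) _ _ _ unitPhi dtPhi).
rewrite dt_D mulr0 mul0r addr0.
rewrite (opcomm_Nsplit (pd_plus P (L ^+ k))) pd_plus_minus.
rewrite [opcomm (L ^+ k) _]opcomm_comm ?subr0 //.
exact/commr_sym/commrX/commr_refl.
Qed.

Lemma dt_osM : dt P n M = opcomm (pd_plus P (L ^+ k)) M.
Proof.
case: flows => dtPhi _ _ _; case: gam => dtGam _.
rewrite {1}/osM (leibniz_dressing (dt_mul P n) _ _ _ unitPhi dtPhi) dtGam.
rewrite (opcomm_Nsplit (pd_plus P (L ^+ k))) pd_plus_minus.
rewrite k_succ opcomm_laxL_osM.
by rewrite !mulr_natl mulrnAr mulrnAl -exprconj // subrK.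
Qed.

Lemma dt_laxLh_inv : dt P n Lh^-1 = opcomm (pd_plus P (L ^+ k)) Lh^-1.
Proof.
case: flows => _ dtPhih _ _.
rewrite {1}laxLh_inv (leibniz_dressing (dt_mul P n) _ _ _ unitPhih dtPhih).
rewrite dt_D mulr0 mul0r addr0 -laxLh_inv opcommBl.
case: ifP => _; last by rewrite opcomm0l subr0.
by rewrite [opcomm Lh^-1 _]opcomm_comm ?subr0.
Qed.

Lemma dt_osMh : dt P n Mh = opcomm (pd_plus P (L ^+ k)) Mh.
Proof.
case: flows => _ dtPhih _ _; case: gamh => dtGamh _.
rewrite {1}/osMh (leibniz_dressing (dt_mul P n) _ _ _ unitPhih dtPhih).
rewrite dtGamh opcommBl; case: ifP => _.
  by rewrite opcomm_laxLh_inv_osMh mulr1 mulrV // subrK.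
by rewrite opcomm0l subr0 mulr0 mul0r addr0.
Qed.

Lemma dth_laxL : dth P n L = opcomm (- pd_minus P (Lh ^+ k)) L.
Proof.
case: flows => _ _ dthPhi _.
rewrite {1}/laxL (leibniz_dressing (dth_mul P n) _ _ _ unitPhi dthPhi).
by rewrite dth_D mulr0 mul0r addr0.
Qed.

Lemma dth_laxLh_inv : dth P n Lh^-1 = opcomm (- pd_minus P (Lh ^+ k)) Lh^-1.
Proof.
case: flows => _ _ _ dthPhih.
rewrite {1}laxLh_inv (leibniz_dressing (dth_mul P n) _ _ _ unitPhih dthPhih).
rewrite dth_D mulr0 mul0r addr0 -laxLh_inv.
rewrite (opcomm_Nsplit (pd_plus P (Lh ^+ k))) pd_plus_minus.
rewrite [opcomm (Lh ^+ k) _]opcomm_comm ?subr0 //.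
exact/commrV/commr_sym/commrX/commr_refl.
Qed.

Lemma dth_osM : dth P n M = opcomm (- pd_minus P (Lh ^+ k)) M.
Proof.
case: flows => _ _ dthPhi _; case: gam => _ dthGam.
rewrite {1}/osM (leibniz_dressing (dth_mul P n) _ _ _ unitPhi dthPhi).
by rewrite dthGam mulr0 mul0r addr0.
Qed.

Lemma dth_osMh : dth P n Mh = opcomm (- pd_minus P (Lh ^+ k)) Mh.
Proof.
case: flows => _ _ _ dthPhih; case: gamh => _ dthGamh.
rewrite {1}/osMh (leibniz_dressing (dth_mul P n) _ _ _ unitPhih dthPhih).
rewrite dthGamh (opcomm_Nsplit (pd_plus P (Lh ^+ k))) pd_plus_minus k_succ.
by rewrite opcomm_laxLh_osMh addn2 opprK.
Qed.

End Flow.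

End TwoComponentBKP.

Theorem proposition3p2 (K : fieldType) (A : unitAlgType K) (F : comNzRingType)
  (P : psido_alg A F) (Phi Phih Gam Gamh : A) :
  two_comp_BKP P Phi Phih ->
  is_Gamma P Gam -> is_Gammah P Gamh ->
  forall (p : ncpoly K) (n : nat),
    let X := nceval (laxL P Phi) (laxLh P Phih)^-1
                    (osM Phi Gam) (osMh Phih Gamh) p in
    dt P n X = opcomm (pd_plus P (laxL P Phi ^+ (2 * n + 1))) X /\
    dth P n X = opcomm (- pd_minus P (laxLh P Phih ^+ (2 * n + 1))) X.
Proof.
move=> bkp gam gamh p n X; split.
- exact: (nceval_derivation (dt_add P n) (dt_mul P n) (dt_scale P n)
    (dt_laxL bkp n) (dt_laxLh_inv bkp n)
    (dt_osM bkp gam n) (dt_osMh bkp gamh n)).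
- exact: (nceval_derivation (dth_add P n) (dth_mul P n) (dth_scale P n)
    (dth_laxL bkp n) (dth_laxLh_inv bkp n)
    (dth_osM bkp gam n) (dth_osMh bkp gamh n)).
Qed.
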